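(* There exist polynomials $N$ and $D$ with rational coefficients in ten variables such that, for every convex cyclic pentagon with area $A$, vertex-triangle areas $(0),(1),(2),(3),(4)$ and side lengths $a_0,\dots,a_4$, $$D\big((0),\dots,(4),a_0^2,\dots,a_4^2\big)\cdot A \;=\; N\big((0),\dots,(4),a_0^2,\dots,a_4^2\big),$$ and $D$ does not vanish identically on such data. In other words, the area of a cyclic pentagon is a rational function of the areas of its vertex triangles and the squares of its side lengths.
   Context: A cyclic pentagon is a pentagon inscribed in a circle. Its vertices are labelled $0,1,2,3,4$ in cyclic order, with indices taken mod $5$. The vertex triangle at vertex $i$ is the triangle with vertices $i-1,i,i+1$, and $(i)$ denotes its area. $A$ denotes the area of the pentagon. *)

From HB Require Import structures.
From mathcomp Require Import all_boot all_order all_algebra.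
From mathcomp Require Import mpoly.
Set Implicit Arguments. Unset Strict Implicit. Unset Printing Implicit Defensive.
Import Order.TTheory GRing.Theory Num.Theory.
Local Open Scope ring_scope.

Section Pentagon.
Variable R : rcfType.

Definition point := (R * R)%type.

Definition pentagon := 'I_5 -> point.

Definition nxt (i : 'I_5) : 'I_5 := ordS i.
Definition prv (i : 'I_5) : 'I_5 := ord_pred i.

(* twice the signed area of triangle p q r *)
Definition orient (p q r : point) : R :=
  (q.1 - p.1) * (r.2 - p.2) - (q.2 - p.2) * (r.1 - p.1).

Definition dist2 (p q : point) : R := (p.1 - q.1) ^+ 2 + (p.2 - q.2) ^+ 2.

Definition cyclic (P : pentagon) : Prop :=
  exists (c : point) (r2 : R), 0 < r2 /\ forall i, dist2 (P i) c = r2.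

(* (strictly) convex polygon with vertices in cyclic order 0,1,2,3,4:
   for each side (i,i+1), all other vertices lie strictly on the same side,
   the side being the same (left for counterclockwise, right for clockwise)
   for all edges. *)
Definition convex (P : pentagon) : Prop :=
  (forall i j : 'I_5, j != i -> j != nxt i -> 0 < orient (P i) (P (nxt i)) (P j))
  \/
  (forall i j : 'I_5, j != i -> j != nxt i -> orient (P i) (P (nxt i)) (P j) < 0).

(* area of the pentagon (shoelace formula) *)
Definition pent_area (P : pentagon) : R :=
  `| \sum_(i < 5) ((P i).1 * (P (nxt i)).2 - (P (nxt i)).1 * (P i).2) | / 2.

Definition vtri_area (P : pentagon) (i : 'I_5) : R :=
  `| orient (P (prv i)) (P i) (P (nxt i)) | / 2.

Definition side2 (P : pentagon) (i : 'I_5) : R := dist2 (P i) (P (nxt i)).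

Definition pent_data (P : pentagon) : 'I_10 -> R := fun k =>
  if (k < 5)%N then vtri_area P (inord k) else side2 P (inord (k - 5)).

End Pentagon.

Definition evalQ (R : rcfType) (p : {mpoly rat[10]}) (v : 'I_10 -> R) : R :=
  (map_mpoly ratr p).@[v].

From HB Require Import structures.
From mathcomp Require Import all_boot all_order all_algebra.
From mathcomp Require Import mpoly.
From mathcomp Require Import ring lra.
Set Implicit Arguments. Unset Strict Implicit. Unset Printing Implicit Defensive.
Import Order.TTheory GRing.Theory Num.Theory.
Local Open Scope ring_scope.

(* Let c and r be the centre and squared radius of the circle, and w_i twice
   the signed area of the triangle c P_i P_(i+1), so that 2A = w_0 + ... + w_4.
   For three consecutive vertices on the circle,
   4 r (i+1) = a_i^2 w_(i+1) + a_(i+1)^2 w_i, a cyclic linear system in the w_i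
   with determinant 2 a_0^2 ... a_4^2; its adjugate rows L_i are polynomials in
   the data, and w_i = 2 r L_i / (a_0^2 ... a_4^2).  Only r remains unknown:
   the chord relations 4 w_i^2 = a_i^2 (4 r - a_i^2) for i = 0, 1 give two
   equations in r and r^2, from which r^2 can be eliminated.  Convexity makes
   all the vertex triangles, and the pentagon, have the orientation of the w_i,
   which removes the absolute values. *)

Lemma nxt5 (i : 'I_5) : nxt (nxt (nxt (nxt (nxt i)))) = i.
Proof. by case: i => -[|[|[|[|[|]]]]] // ?; apply/val_inj. Qed.

Lemma iter_nxt_ord0 (i : 'I_5) : iter i nxt ord0 = i.
Proof. by case: i => -[|[|[|[|[|]]]]] // ?; apply/val_inj. Qed.

Lemma prv_nxt (i : 'I_5) : prv (nxt i) = i.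
Proof. exact: ordSK. Qed.

Lemma nxt_prv (i : 'I_5) : nxt (prv i) = i.
Proof. exact: ord_predK. Qed.

Lemma nxt_neq (i : 'I_5) : nxt i != i.
Proof. by case: i => -[|[|[|[|[|]]]]]. Qed.

Lemma nxt_neq_prv (i : 'I_5) : nxt i != prv i.
Proof. by case: i => -[|[|[|[|[|]]]]]. Qed.

Section AdjugateRows.
Variable S : comPzRingType.
Implicit Types (t e w : 'I_5 -> S) (i : 'I_5).

Definition rot_prod e i : S :=
  e i * e (nxt i) * e (nxt (nxt i)) * e (nxt (nxt (nxt i))) * e (nxt (nxt (nxt (nxt i)))).

Lemma rot_prod_nxt e i : rot_prod e (nxt i) = rot_prod e i.
Proof. by rewrite /rot_prod nxt5; ring. Qed.

Lemma rot_prod_big e i : rot_prod e i = \prod_j e j.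
Proof.
rewrite -(iter_nxt_ord0 i); elim: (nat_of_ord i) => [|k IHk]; last by rewrite /= rot_prod_nxt.
rewrite /rot_prod !big_ord_recl big_ord0 mulr1 !mulrA.
by congr (_ * _ * _ * _ * _); congr e; apply/val_inj.
Qed.

Definition adj_row t e i : S :=
  let i1 := nxt i in let i2 := nxt i1 in let i3 := nxt i2 in let i4 := nxt i3 in
  e i * (t i * e i1 * e i2 * e i3 - t i4 * e i * e i1 * e i2 + t i3 * e i * e i1 * e i4
         - t i2 * e i * e i3 * e i4 + t i1 * e i2 * e i3 * e i4).

Lemma adj_rowZ (a : S) t e i : a * adj_row t e i = adj_row (fun j => a * t j) e i.
Proof. by rewrite /adj_row; ring. Qed.

(* [adj_row t e] is the adjugate of the system below, of determinant
   [2 * \prod_j e j]. *)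
Lemma adj_row_solves (r : S) t e w :
    (forall j, 4 * r * t (nxt j) = e j * w (nxt j) + e (nxt j) * w j) ->
  forall i, 4 * r * adj_row t e i = 2 * (\prod_j e j) * w i.
Proof.
move=> sys i; have := sys (nxt (nxt (nxt (nxt i)))); rewrite nxt5 => sys4.
rewrite adj_rowZ /adj_row /= sys4 !sys -(rot_prod_big e i) /rot_prod.
by ring.
Qed.

Definition pent_den t e : S :=
  4 * (\prod_i e i)
    * (e ord0 * adj_row t e (nxt ord0) ^+ 2 - e (nxt ord0) * adj_row t e ord0 ^+ 2).

Definition pent_num t e : S :=
  (\sum_i adj_row t e i)
    * (e ord0 ^+ 2 * adj_row t e (nxt ord0) ^+ 2 - e (nxt ord0) ^+ 2 * adj_row t e ord0 ^+ 2).

End AdjugateRows.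

Section RmorphRows.
Variables (S S' : comPzRingType) (f : {rmorphism S -> S'}).
Variables (t e : 'I_5 -> S) (t' e' : 'I_5 -> S').
Hypotheses (ft : forall i, f (t i) = t' i) (fe : forall i, f (e i) = e' i).

Lemma rmorph_adj_row i : f (adj_row t e i) = adj_row t' e' i.
Proof. by rewrite /adj_row !(rmorphM, rmorphB, rmorphD) !ft !fe. Qed.

Lemma rmorph_pent_den : f (pent_den t e) = pent_den t' e'.
Proof.
rewrite /pent_den !rmorphM rmorph_nat rmorph_prod rmorphB.
rewrite (rmorphM f (e ord0)) (rmorphM f (e (nxt ord0))) !rmorphXn !rmorph_adj_row !fe.
by under eq_bigr do rewrite fe.
Qed.

Lemma rmorph_pent_num : f (pent_num t e) = pent_num t' e'.
Proof.
rewrite /pent_num rmorphM rmorph_sum rmorphB.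
rewrite (rmorphM f (e ord0 ^+ 2)) (rmorphM f (e (nxt ord0) ^+ 2)) !rmorphXn !rmorph_adj_row !fe.
by under eq_bigr do rewrite rmorph_adj_row.
Qed.

End RmorphRows.

Section Elimination.
Variables (F : numFieldType) (r : F) (t e w : 'I_5 -> F).
Hypothesis r_neq0 : r != 0.
Hypothesis vertex_rel : forall i, 4 * r * t (nxt i) = e i * w (nxt i) + e (nxt i) * w i.
Hypothesis chord_rel : forall i, 4 * w i ^+ 2 = e i * (4 * r - e i).

Let adj_rowE i : adj_row t e i = (\prod_j e j) * w i / (2 * r).
Proof.
apply: (mulfI (_ : 4 * r != 0)); first by rewrite mulf_neq0 ?pnatr_eq0.
by rewrite (adj_row_solves vertex_rel); field.
Qed.

Let wsqrE i : w i ^+ 2 = e i * (4 * r - e i) / 4.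
Proof. by rewrite -chord_rel; field. Qed.

Lemma pent_denE :
  pent_den t e = (\prod_i e i) ^+ 3 * e ord0 * e (nxt ord0) * (e ord0 - e (nxt ord0)) / (4 * r ^+ 2).
Proof. by rewrite /pent_den !adj_rowE !expr_div_n !exprMn !wsqrE; field. Qed.

Lemma pent_den_area : pent_den t e * ((\sum_i w i) / 2) = pent_num t e.
Proof.
rewrite pent_denE /pent_num (eq_bigr _ (fun i _ => adj_rowE i)) -!mulr_suml -mulr_sumr.
by rewrite !adj_rowE !expr_div_n !exprMn !wsqrE; field.
Qed.

End Elimination.

Section PlaneGeometry.
Variable R : rcfType.
Implicit Types (a b c d : point R) (r s x : R).

Lemma orient_on_circle c r a b d :
    dist2 a c = r -> dist2 b c = r -> dist2 d c = r ->
  2 * r * orient a b d = dist2 a b * orient c b d + dist2 b d * orient c a b.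
Proof.
move=> ha hb hd; apply/eqP; rewrite -subr_eq0; apply/eqP.
(* The difference is a combination of the powers [dist2 x c - r] of a, b, d. *)
transitivity (2 * (dist2 b c - r) * orient c a d
  - (dist2 a c - r + (dist2 b c - r)) * orient c b d
  - (dist2 b c - r + (dist2 d c - r)) * orient c a b).
  by rewrite /dist2 /orient; ring.
by rewrite ha hb hd subrr; ring.
Qed.

Lemma chord_orient c r a b : dist2 a c = r -> dist2 b c = r ->
  4 * orient c a b ^+ 2 = dist2 a b * (4 * r - dist2 a b).
Proof.
move=> ha hb.
pose dot := (a.1 - c.1) * (b.1 - c.1) + (a.2 - c.2) * (b.2 - c.2).
have lagrange : orient c a b ^+ 2 + dot ^+ 2 = dist2 a c * dist2 b c.
  by rewrite /orient /dist2 /dot; ring.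
have chord : dist2 a b = dist2 a c + dist2 b c - 2 * dot by rewrite /dist2 /dot; ring.
rewrite ha hb in lagrange chord.
have -> : orient c a b ^+ 2 = r * r - dot ^+ 2 by rewrite -lagrange; ring.
by rewrite chord; ring.
Qed.

Lemma shoelace_center n (Q : 'I_n -> point R) c :
  \sum_i ((Q i).1 * (Q (ordS i)).2 - (Q (ordS i)).1 * (Q i).2)
  = \sum_i orient c (Q i) (Q (ordS i)).
Proof.
pose g i := c.1 * (Q i).2 - (Q i).1 * c.2.
transitivity (\sum_i ((Q i).1 * (Q (ordS i)).2 - (Q (ordS i)).1 * (Q i).2)
              + (\sum_i g i - \sum_i g (ordS i))).
  by rewrite [\sum_i g i](reindex_inj (@ordS_inj n)) subrr addr0.
by rewrite -sumrB -big_split; apply: eq_bigr => i _; rewrite /= /g /orient; ring.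
Qed.

Lemma normr_sign s x : s ^+ 2 = 1 -> 0 < s * x -> `|x| = s * x.
Proof.
move=> s_sqr sx; have s_norm : `|s| = 1.
  by apply/eqP; rewrite -sqrp_eq1 // -normrX s_sqr normr1.
by rewrite -(gtr0_norm sx) normrM s_norm mul1r.
Qed.

End PlaneGeometry.

Lemma convex_sign (R : rcfType) (P : pentagon R) : convex P ->
  exists2 s : R, s ^+ 2 = 1 &
    forall i j, j != i -> j != nxt i -> 0 < s * orient (P i) (P (nxt i)) (P j).
Proof.
case=> conv; [exists 1 | exists (-1)]; rewrite ?sqrrN ?expr1n // => i j ji jn.
  by rewrite mul1r conv.
by rewrite mulN1r oppr_gt0 conv.
Qed.

Section PentagonOnCircle.
Variables (R : rcfType) (P : pentagon R) (c : point R) (r s : R).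
Hypotheses (r_neq0 : r != 0) (on_circle : forall i, dist2 (P i) c = r).
Hypotheses (s_sqr : s ^+ 2 = 1)
  (s_convex : forall i j, j != i -> j != nxt i -> 0 < s * orient (P i) (P (nxt i)) (P j)).

Let w i := s * orient c (P i) (P (nxt i)).

Lemma vtri_area_signed i : vtri_area P i = s * orient (P (prv i)) (P i) (P (nxt i)) / 2.
Proof.
rewrite /vtri_area (normr_sign s_sqr) //.
by have := @s_convex (prv i) (nxt i); rewrite nxt_prv; apply; rewrite ?nxt_neq_prv ?nxt_neq.
Qed.

Lemma vtri_area_on_circle i :
  4 * r * vtri_area P (nxt i) = side2 P i * w (nxt i) + side2 P (nxt i) * w i.
Proof.
rewrite vtri_area_signed prv_nxt /side2 /w.
transitivity (s * (2 * r * orient (P i) (P (nxt i)) (P (nxt (nxt i))))); first by field.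
by rewrite (orient_on_circle (on_circle _) (on_circle _) (on_circle _)); ring.
Qed.

Lemma side_orient_on_circle i : 4 * w i ^+ 2 = side2 P i * (4 * r - side2 P i).
Proof. by rewrite exprMn s_sqr mul1r; exact: chord_orient. Qed.

Lemma orient_sign_ge0 i j : 0 <= s * orient (P i) (P (nxt i)) (P j).
Proof.
have [-> | ji] := eqVneq j i.
  suff -> : orient (P i) (P (nxt i)) (P i) = 0 by rewrite mulr0.
  by rewrite /orient; ring.
have [-> | jn] := eqVneq j (nxt i).
  suff -> : orient (P i) (P (nxt i)) (P (nxt i)) = 0 by rewrite mulr0.
  by rewrite /orient; ring.
exact/ltW/s_convex.
Qed.

Lemma pent_area_centered : pent_area P = (\sum_i w i) / 2.
Proof.
rewrite /pent_area (shoelace_center P c) -mulr_sumr (normr_sign s_sqr) //.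
rewrite -(shoelace_center P c) (shoelace_center P (P ord0)) mulr_sumr.
rewrite (eq_bigr (fun i => s * orient (P i) (P (nxt i)) (P ord0))) => [|i _]; last first.
  by rewrite /orient; ring.
rewrite (bigD1 (nxt ord0)) //= ltr_wpDr ?sumr_ge0 // => [i _|]; first exact: orient_sign_ge0.
exact: s_convex.
Qed.

Lemma area_identity_on_circle :
  pent_den (vtri_area P) (side2 P) * pent_area P = pent_num (vtri_area P) (side2 P).
Proof.
rewrite pent_area_centered.
exact: pent_den_area r_neq0 vtri_area_on_circle side_orient_on_circle.
Qed.

Lemma pent_den_on_circle :
  pent_den (vtri_area P) (side2 P)
  = (\prod_i side2 P i) ^+ 3 * side2 P ord0 * side2 P (nxt ord0)
    * (side2 P ord0 - side2 P (nxt ord0)) / (4 * r ^+ 2).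
Proof. exact: pent_denE r_neq0 vtri_area_on_circle side_orient_on_circle. Qed.

End PentagonOnCircle.

Section CyclicConvex.
Variables (R : rcfType) (P : pentagon R).
Hypotheses (P_cyclic : cyclic P) (P_convex : convex P).

Lemma pentagon_area_identity :
  pent_den (vtri_area P) (side2 P) * pent_area P = pent_num (vtri_area P) (side2 P).
Proof.
case: P_cyclic => c [r [/lt0r_neq0 r_neq0 on_circle]]; case/convex_sign: P_convex => s s_sqr s_convex.
exact: area_identity_on_circle r_neq0 on_circle s_sqr s_convex.
Qed.

Lemma pentagon_den_neq0 :
    (forall i, side2 P i != 0) -> side2 P ord0 != side2 P (nxt ord0) ->
  pent_den (vtri_area P) (side2 P) != 0.
Proof.
move=> sides_neq0 side01.
case: P_cyclic => c [r [/lt0r_neq0 r_neq0 on_circle]]; case/convex_sign: P_convex => s s_sqr s_convex.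
rewrite (pent_den_on_circle r_neq0 on_circle s_sqr s_convex).
have prod_neq0 : \prod_i side2 P i != 0 by apply/prodf_neq0.
by rewrite !(mulf_neq0, invr_eq0, expf_neq0, subr_eq0, pnatr_eq0).
Qed.

End CyclicConvex.

Definition den_poly : {mpoly rat[10]} :=
  pent_den (fun i => 'X_(lshift 5 i)) (fun i => 'X_(rshift 5 i)).

Definition num_poly : {mpoly rat[10]} :=
  pent_num (fun i => 'X_(lshift 5 i)) (fun i => 'X_(rshift 5 i)).

Section Evaluation.
Variables (R : rcfType) (P : pentagon R).

Lemma pent_data_lshift (i : 'I_5) : pent_data P (lshift 5 i) = vtri_area P i.
Proof. by rewrite /pent_data /= ltn_ord inord_val. Qed.

Lemma pent_data_rshift (i : 'I_5) : pent_data P (rshift 5 i) = side2 P i.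
Proof. by rewrite /pent_data /= addKn inord_val. Qed.

Lemma evalQ_den_poly : evalQ den_poly (pent_data P) = pent_den (vtri_area P) (side2 P).
Proof.
apply: (rmorph_pent_den (f := meval (pent_data P) \o map_mpoly ratr)
         (t' := vtri_area P) (e' := side2 P)) => i /=;
  by rewrite map_mpolyX mevalXU ?pent_data_lshift ?pent_data_rshift.
Qed.

Lemma evalQ_num_poly : evalQ num_poly (pent_data P) = pent_num (vtri_area P) (side2 P).
Proof.
apply: (rmorph_pent_num (f := meval (pent_data P) \o map_mpoly ratr)
         (t' := vtri_area P) (e' := side2 P)) => i /=;
  by rewrite map_mpolyX mevalXU ?pent_data_lshift ?pent_data_rshift.
Qed.

End Evaluation.

Section Example.
Variable R : rcfType.

Definition example_pentagon : pentagon R := fun i =>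
  match nat_of_ord i with
  | 0 => (5, 0) | 1 => (3, 4) | 2 => (-5, 0) | 3 => (-3, -4) | _ => (3, -4)
  end.

Lemma example_cyclic : cyclic example_pentagon.
Proof.
exists (0, 0), 25; split; first by rewrite ltr0n.
by case=> -[|[|[|[|[|]]]]] //= ?; rewrite /dist2 /=; ring.
Qed.

Lemma example_convex : convex example_pentagon.
Proof.
left; case=> -[|[|[|[|[|]]]]] // ? [[|[|[|[|[|]]]]] ?] //= _ _.
all: by rewrite /orient /=; lra.
Qed.

Lemma example_sides_neq0 i : side2 example_pentagon i != 0.
Proof. by case: i => -[|[|[|[|[|]]]]] //= ?; rewrite /side2 /dist2 /=; apply: lt0r_neq0; lra. Qed.

Lemma example_side01 : side2 example_pentagon ord0 != side2 example_pentagon (nxt ord0).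
Proof. by rewrite /side2 /dist2 /= -subr_eq0; apply: ltr0_neq0; lra. Qed.

End Example.

Theorem theorem6 (R : rcfType) :
  exists N D : {mpoly rat[10]},
    (forall P : pentagon R, cyclic P -> convex P ->
       evalQ D (pent_data P) * pent_area P = evalQ N (pent_data P))
    /\
    (exists P : pentagon R, cyclic P /\ convex P /\ evalQ D (pent_data P) != 0).
Proof.
exists num_poly, den_poly; split.
  (* Rewriting with [evalQ_den_poly] in this goal would try to unify [num_poly]
     with [den_poly] by unfolding both. *)
  move=> P P_cyclic P_convex; have := pentagon_area_identity P_cyclic P_convex.
  by rewrite -evalQ_den_poly -evalQ_num_poly.
exists (example_pentagon R); split; first exact: example_cyclic.
split; first exact: example_convex.
rewrite evalQ_den_poly; apply: pentagon_den_neq0.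
- exact: example_cyclic.
- exact: example_convex.
- exact: example_sides_neq0.
- exact: example_side01.
Qed.
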